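(* Let $m\ge2$ and let $V\subseteq k[\beta]$ be a $k$-subspace with $(\beta^m)\subseteq V$. Let $(p_i)_{i\ge1}$ be a $k$-basis of $V$ whose orders $\nu_i=\mathrm{ord}\,p_i$ satisfy $0\le\nu_1<\nu_2<\cdots$. Then $$\dim_k\mathcal D'_m(V)\ge 2m-\max(1,\nu_1,m-\nu_2+1)-\max(1,m-\nu_1).$$ In particular, $\mathcal D'_m(V)=0$ implies $\nu_1=0$ and $\nu_2=1$.
   Context: $k$ is a field; the order $\mathrm{ord}\,p$ of a nonzero polynomial $p\in k[\beta]$ is the smallest exponent of $\beta$ with nonzero coefficient. A first order differential operator $A+B\frac{d}{d\beta}$ ($A,B\in k[\beta]$) acts by $v\mapsto Av+Bv'$. $\mathcal D'_m(V)$ is the quotient of the Lie algebra $\{\Theta=A+B\frac{d}{d\beta}: A,B\in k[\beta],\ B(0)=0,\ \Theta(V)\subseteq V\}$ by $\{A+B\frac{d}{d\beta}: A\in k+(\beta^m),\ B\in(\beta^m)\}$. (For $\Lambda=kQ/I(n;n',n'';V)$ with $m=\min(n',n'')$, this is the Lie algebra $\mathcal D'(\Lambda)$, and $\dim\mathrm{HH}^1(\Lambda)=\dim\mathcal D'(\Lambda)+n-m+c$.) *)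

From HB Require Import structures.
From mathcomp Require Import all_boot all_order all_algebra.
Set Implicit Arguments. Unset Strict Implicit. Unset Printing Implicit Defensive.
Import GRing.Theory.
Local Open Scope ring_scope.

Section Defs.
Variable k : fieldType.

(* ord p : smallest exponent of beta with nonzero coefficient (0 for p = 0). *)
Definition pord (p : {poly k}) : nat := find (fun c => c != 0) (polyseq p).

Definition is_subspace (V : {poly k} -> Prop) : Prop :=
  V 0 /\ forall (a : k) (u v : {poly k}), V u -> V v -> V (a *: u + v).

(* (p_i)_{i>=0} (paper: i >= 1, shifted by one) is a k-basis of V. *)
Definition is_basis_seq (V : {poly k} -> Prop) (p : nat -> {poly k}) : Prop :=
  (forall i, V (p i)) /\
  (forall (n : nat) (c : 'I_n -> k),
      \sum_(i < n) c i *: p i = 0 -> forall i, c i = 0) /\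
  (forall v, V v -> exists (n : nat) (c : 'I_n -> k), v = \sum_(i < n) c i *: p i).

(* The Lie algebra { A + B d/dbeta : B(0) = 0, Theta(V) <= V },
   an operator being identified with its pair of coefficients (A, B). *)
Definition inD (V : {poly k} -> Prop) (Th : {poly k} * {poly k}) : Prop :=
  Th.2.[0] = 0 /\ forall v, V v -> V (Th.1 * v + Th.2 * v^`()).

Definition inN (m : nat) (Th : {poly k} * {poly k}) : Prop :=
  (exists (c : k) (q : {poly k}), Th.1 = c%:P + 'X^m * q) /\
  (exists q : {poly k}, Th.2 = 'X^m * q).

(* dim_k D'_m(V) >= d : there are d elements of the Lie algebra that are
   linearly independent modulo the ideal. *)
Definition dimDm_ge (V : {poly k} -> Prop) (m d : nat) : Prop :=
  exists F : 'I_d -> {poly k} * {poly k},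
    (forall i, inD V (F i)) /\
    forall c : 'I_d -> k,
      inN m (\sum_(i < d) c i *: (F i).1, \sum_(i < d) c i *: (F i).2) ->
      forall i, c i = 0.

Definition Dm_zero (V : {poly k} -> Prop) (m : nat) : Prop :=
  forall Th, inD V Th -> inN m Th.

End Defs.

(* Let nu_1 < nu_2 be the orders of the first two basis vectors.  Every
   v in V has order >= nu_1, and the Wronskian p_1 v' - p_1' v has order
   >= nu_1 + nu_2 - 1 because it vanishes for v = p_1.  Hence the operators
   beta^j with max(1, m - nu_1) <= j < m and beta^(j - nu_1) (p_1 d/dbeta - p_1')
   with max(1, nu_1, m - nu_2 + 1) <= j < m map V into (beta^m), which lies in V.
   Their A-parts, resp. B-parts, have pairwise distinct orders in [1, m), so
   they are independent modulo the ideal.  If D'_m(V) = 0 both families are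
   empty, which forces nu_1 = 0 and nu_2 = 1. *)

From mathcomp Require Import all_boot all_order all_algebra.
From mathcomp Require Import zify ring.
Import GRing.Theory.
Set Implicit Arguments. Unset Strict Implicit.
Local Open Scope ring_scope.

Section PolyOrder.
Variable k : fieldType.
Implicit Types (f g q v : {poly k}) (a b n s : nat).

Definition ord_geq q n : Prop := forall l, (l < n)%N -> q`_l = 0.

Lemma ord_geq_le q a b : (b <= a)%N -> ord_geq q a -> ord_geq q b.
Proof. by move=> le_ba h l lt_lb; apply: h; apply: leq_trans le_ba. Qed.

Lemma ord_geq0 n : ord_geq 0 n.
Proof. by move=> l _; rewrite coef0. Qed.

Lemma ord_geqD f g n : ord_geq f n -> ord_geq g n -> ord_geq (f + g) n.
Proof. by move=> hf hg l hl; rewrite coefD hf // hg // addr0. Qed.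

Lemma ord_geqN q n : ord_geq q n -> ord_geq (- q) n.
Proof. by move=> h l hl; rewrite coefN h // oppr0. Qed.

Lemma ord_geqZ (c : k) q n : ord_geq q n -> ord_geq (c *: q) n.
Proof. by move=> h l hl; rewrite coefZ h // mulr0. Qed.

Lemma ord_geqM f g a b : ord_geq f a -> ord_geq g b -> ord_geq (f * g) (a + b).
Proof.
move=> hf hg l hl; rewrite coefM big1 // => j _.
have [lt_ja | le_aj] := ltnP j a; first by rewrite hf // mul0r.
by rewrite hg ?mulr0 //; have := ltn_ord j; lia.
Qed.

Lemma ord_geqXn n : ord_geq 'X^n n.
Proof. by move=> l hl; rewrite coefXn (ltn_eqF hl). Qed.

Lemma ord_geq_deriv q n : ord_geq q n -> ord_geq q^`() n.-1.
Proof. by move=> h l hl; rewrite coef_deriv h ?mul0rn //; lia. Qed.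

Lemma ord_geq_pord q : ord_geq q (pord q).
Proof. by move=> l /(before_find 0) /negbFE /eqP. Qed.

Lemma coef_pord_neq0 q : q != 0 -> q`_(pord q) != 0.
Proof.
move=> q_neq0; apply: (@nth_find _ 0 (fun c : k => c != 0)).
apply/hasP; exists (lead_coef q); last by rewrite lead_coef_eq0.
by rewrite lead_coefE mem_nth // prednK // lt0n size_poly_eq0.
Qed.

Lemma ord_geq_XnM q n : ord_geq q n -> q = 'X^n * drop_poly n q.
Proof.
move=> h; rewrite -{1}(poly_take_drop n q) mulrC.
suff -> : take_poly n q = 0 by rewrite add0r.
by apply/polyP => i; rewrite coef_take_poly coef0; case: ifP => // /h.
Qed.

(* The coefficient of the sum at [pos i] only involves the [g j] with [j <= i]. *)
Lemma triangular_coef_indep n (g : nat -> {poly k}) (pos : nat -> nat)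
    (c : 'I_n -> k) :
  {homo pos : i j / (i < j)%N} ->
  (forall i, ord_geq (g i) (pos i)) -> (forall i, (g i)`_(pos i) != 0) ->
  (forall i : 'I_n, (\sum_(j < n) c j *: g j)`_(pos i) = 0) ->
  forall i, c i = 0.
Proof.
move=> pos_incr g_ord g_lead sum0.
suff c0 N (i : 'I_n) : (i < N)%N -> c i = 0 by move=> i; apply: (c0 i.+1).
elim: N i => [// | N IH] i lt_iN.
move: (sum0 i); rewrite coef_sum (bigD1 i) //= big1 => [|j neq_ji].
  by rewrite addr0 coefZ => /eqP; rewrite mulf_eq0 (negbTE (g_lead i)) orbF => /eqP.
case: (ltngtP j i) => [lt_ji | lt_ij | /val_inj eq_ji].
- by rewrite coefZ (IH j) ?mul0r //; lia.
- by rewrite coefZ g_ord ?mulr0 // pos_incr.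
- by rewrite eq_ji eqxx in neq_ji.
Qed.

Definition wronskian f g := f * g^`() - f^`() * g.

Lemma wronskian0r f : wronskian f 0 = 0.
Proof. by rewrite /wronskian deriv0 !mulr0 subr0. Qed.

Lemma wronskianDr f g q : wronskian f (g + q) = wronskian f g + wronskian f q.
Proof. by rewrite /wronskian derivD; ring. Qed.

Lemma wronskianZr f (c : k) g : wronskian f (c *: g) = c *: wronskian f g.
Proof. by rewrite /wronskian derivZ -!scalerAr scalerBr. Qed.

Lemma wronskian_id f : wronskian f f = 0.
Proof. by rewrite /wronskian mulrC subrr. Qed.

Lemma ord_geq_wronskian f g a b :
  ord_geq f a -> ord_geq g b -> ord_geq (wronskian f g) (a + b - 1).
Proof.
move=> hf hg; apply: ord_geqD; last apply: ord_geqN.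
  by apply: ord_geq_le (ord_geqM hf (ord_geq_deriv hg)); lia.
by apply: ord_geq_le (ord_geqM (ord_geq_deriv hf) hg); lia.
Qed.

(* The operator [beta^s (f d/dbeta - f')]. *)
Definition wronskian_op f s := (- ('X^s * f^`()), 'X^s * f).

Lemma wronskian_opE f v s :
  (wronskian_op f s).1 * v + (wronskian_op f s).2 * v^`() = 'X^s * wronskian f v.
Proof. by rewrite /wronskian /=; ring. Qed.

End PolyOrder.

Arguments ord_geqXn {k} n.
Arguments ord_geq_pord {k} q.

Section Basis.
Variables (k : fieldType) (V : {poly k} -> Prop) (p : nat -> {poly k}).
Hypothesis p_basis : is_basis_seq V p.
Hypothesis pord_incr : forall i, (pord (p i) < pord (p i.+1))%N.

Lemma basis_span_ind (P : {poly k} -> Prop) :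
  P 0 -> (forall u w, P u -> P w -> P (u + w)) -> (forall c i, P (c *: p i)) ->
  forall v, V v -> P v.
Proof.
case: p_basis => _ [_ p_span] P0 PD PZ v /p_span [n [c ->]].
by apply: big_ind => // i _; apply: PZ.
Qed.

Lemma basis0_neq0 : p 0%N != 0.
Proof.
case: p_basis => _ [p_free _]; apply/eqP => p0_eq0.
have := p_free 1%N (fun _ => 1); rewrite big_ord1 p0_eq0 scaler0.
by move=> /(_ erefl ord0) /eqP; rewrite oner_eq0.
Qed.

Lemma pord_basis_le i j : (i <= j)%N -> (pord (p i) <= pord (p j))%N.
Proof.
apply: (@homo_leq _ (fun i => pord (p i)) (fun a b => a <= b)%N) => // [? ? ?|n].
  exact: leq_trans.
exact: ltnW.
Qed.

Lemma ord_geq_basis v : V v -> ord_geq v (pord (p 0%N)).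
Proof.
move: v; apply: basis_span_ind => [|u w|c i]; first exact: ord_geq0.
  exact: ord_geqD.
exact/ord_geqZ/(ord_geq_le (pord_basis_le (leq0n i)))/ord_geq_pord.
Qed.

(* [p 0] is the only basis vector of order below [pord (p 1)], and its
   Wronskian with itself vanishes. *)
Lemma ord_geq_wronskian_basis v :
  V v -> ord_geq (wronskian (p 0%N) v) (pord (p 0%N) + pord (p 1%N) - 1).
Proof.
move: v; apply: basis_span_ind => [|u w|c [|i]].
- by rewrite wronskian0r; exact: ord_geq0.
- by rewrite wronskianDr; exact: ord_geqD.
- by rewrite wronskianZr wronskian_id scaler0; exact: ord_geq0.
rewrite wronskianZr; apply/ord_geqZ/ord_geq_wronskian; first exact: ord_geq_pord.
exact: ord_geq_le (pord_basis_le (ltn0Sn i)) (ord_geq_pord (p i.+1)).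
Qed.

End Basis.

Section LieAlgebra.
Variables (k : fieldType) (V : {poly k} -> Prop) (m : nat).

Lemma inD_ord_geq (A B : {poly k}) :
  (forall q, V ('X^m * q)) -> ord_geq B 1 ->
  (forall v, V v -> ord_geq (A * v + B * v^`()) m) -> inD V (A, B).
Proof.
move=> XmV B_ord AB_ord; split=> [|v /AB_ord /ord_geq_XnM ->] //.
by rewrite horner_coef0 B_ord.
Qed.

Lemma dimDm_ge_le d d' : (d' <= d)%N -> dimDm_ge V m d -> dimDm_ge V m d'.
Proof.
move=> le_d [F [inF indF]].
exists (fun i => F (widen_ord le_d i)); split=> [i | c' inN_c']; first exact: inF.
pose c (j : 'I_d) := if insub (val j) is Some i then c' i else 0.
have c_widen i : c (widen_ord le_d i) = c' i by rewrite /c (valK i).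
have sum_c (f : 'I_d -> {poly k}) :
    \sum_(j < d) c j *: f j = \sum_(i < d') c' i *: f (widen_ord le_d i).
  rewrite (bigID (fun j : 'I_d => (j < d')%N)) /= big_ord_narrow.
  rewrite [X in _ + X]big1 ?addr0 => [|j].
    by apply: eq_bigr => i _; rewrite c_widen.
  by rewrite -leqNgt => le_d'j; rewrite /c insubF ?scale0r // ltnNge le_d'j.
by move=> i; rewrite -c_widen; apply: indF; rewrite !sum_c.
Qed.

Lemma dimDm_ge_eq0 d : Dm_zero V m -> dimDm_ge V m d -> d = 0%N.
Proof.
move=> D0 [F [inF indF]]; case: d F inF indF => // d F inF indF.
pose c (j : 'I_d.+1) : k := (j == ord0)%:R.
have sum_c (f : 'I_d.+1 -> {poly k}) : \sum_(j < d.+1) c j *: f j = f ord0.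
  rewrite (bigD1 ord0) //= big1 => [|j /negbTE j_neq0].
    by rewrite addr0 /c eqxx scale1r.
  by rewrite /c j_neq0 scale0r.
have := indF c; rewrite !sum_c -surjective_pairing => /(_ (D0 _ (inF ord0)) ord0).
by rewrite /c eqxx => /eqP; rewrite oner_eq0.
Qed.

End LieAlgebra.

Section Construction.
Variables (k : fieldType) (m : nat) (V : {poly k} -> Prop) (p : nat -> {poly k}).
Hypothesis XmV : forall q : {poly k}, V ('X^m * q).
Hypothesis p_basis : is_basis_seq V p.
Hypothesis pord_incr : forall i, (pord (p i) < pord (p i.+1))%N.

Lemma inD_wronskian_op s :
  (0 < s + pord (p 0%N))%N -> (m < s + pord (p 0%N) + pord (p 1%N))%N ->
  inD V (wronskian_op (p 0%N) s).
Proof.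
move=> ord_B ord_AB; apply: inD_ord_geq => // [|v Vv] /=.
  exact: ord_geq_le ord_B (ord_geqM (ord_geqXn s) (ord_geq_pord (p 0%N))).
rewrite wronskian_opE; apply: ord_geq_le (ord_geqM (ord_geqXn s)
  (ord_geq_wronskian_basis p_basis pord_incr Vv)); lia.
Qed.

Lemma inD_Xn j : (m <= j + pord (p 0%N))%N -> inD V ('X^j, 0).
Proof.
move=> ord_A; apply: inD_ord_geq => // [|v Vv]; first exact: ord_geq0.
rewrite mul0r addr0; apply: ord_geq_le ord_A _.
exact: ord_geqM (ord_geqXn j) (ord_geq_basis p_basis pord_incr Vv).
Qed.

Lemma dimDm_ge_shifts X Y :
  (0 < X)%N -> (pord (p 0%N) <= X)%N -> (m < X + pord (p 1%N))%N ->
  (0 < Y)%N -> (m <= Y + pord (p 0%N))%N ->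
  dimDm_ge V m ((m - X) + (m - Y)).
Proof.
set nu1 := pord (p 0%N) => X_gt0 le_nu1X lt_mX Y_gt0 le_mY.
set b := (m - X)%N; set e := (m - Y)%N.
pose G n := if (n < b)%N then wronskian_op (p 0%N) (X + n - nu1)
            else ('X^(Y + (n - b)), 0).
have G_lshift (i : 'I_b) : G (lshift e i) = wronskian_op (p 0%N) (X + i - nu1).
  by rewrite /G /= ltn_ord.
have G_rshift (j : 'I_e) : G (rshift b j) = ('X^(Y + j), 0).
  by rewrite /G /= ltnNge leq_addr /= addKn.
exists (fun i : 'I_(b + e) => G i); split=> [i | c [[c0 [q A_eq]] [q' B_eq]]].
  by rewrite /G; case: ifP => _; [apply: inD_wronskian_op | apply: inD_Xn]; lia.
rewrite /= in A_eq B_eq.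
have B_sum : \sum_(i < b) c (lshift e i) *: ('X^(X + i - nu1) * p 0%N) = 'X^m * q'.
  rewrite -B_eq big_split_ord /= [X in _ = _ + X]big1 ?addr0 => [|j _].
    by apply: eq_bigr => i _; rewrite G_lshift.
  by rewrite G_rshift scaler0.
have cl0 : forall i, c (lshift e i) = 0.
  apply: (triangular_coef_indep (c := fun i => c (lshift e i))
    (g := fun n => 'X^(X + n - nu1) * p 0%N) (pos := fun n => (X + n)%N))
    => [n n'|n|n|i].
  - by rewrite ltn_add2l.
  - by apply: ord_geq_le (ord_geqM (ord_geqXn _) (ord_geq_pord (p 0%N))); lia.
  - rewrite coefXnM ifN; last lia.
    have -> : (X + n - (X + n - nu1) = nu1)%N by lia.
    exact/coef_pord_neq0/(basis0_neq0 p_basis).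
  by rewrite B_sum coefXnM ifT //; have := ltn_ord i; rewrite /b; lia.
have A_sum : \sum_(j < e) c (rshift b j) *: 'X^(Y + j) = c0%:P + 'X^m * q.
  rewrite -A_eq big_split_ord /= [X in _ = X + _]big1 ?add0r => [|i _].
    by apply: eq_bigr => j _; rewrite G_rshift.
  by rewrite cl0 scale0r.
have cr0 : forall j, c (rshift b j) = 0.
  apply: (triangular_coef_indep (c := fun j => c (rshift b j))
    (g := fun n => 'X^(Y + n)) (pos := fun n => (Y + n)%N)) => [n n'|n|n|j].
  - by rewrite ltn_add2l.
  - exact: ord_geqXn.
  - by rewrite coefXn eqxx oner_neq0.
  have lt_jm : (Y + j < m)%N by have := ltn_ord j; rewrite /e; lia.
  by rewrite A_sum coefD coefC coefXnM lt_jm addr0 ifN //; lia.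
by move=> i; rewrite -(splitK i); case: (split i) => j; [exact: cl0 | exact: cr0].
Qed.

End Construction.

Theorem mainTheorem16 (k : fieldType) (m : nat) (V : {poly k} -> Prop)
  (p : nat -> {poly k}) :
  (2 <= m)%N ->
  is_subspace V ->
  (forall q : {poly k}, V ('X^m * q)) ->
  is_basis_seq V p ->
  (forall i, pord (p i) < pord (p i.+1))%N ->
  dimDm_ge V m
    (2 * m - maxn 1 (maxn (pord (p 0%N)) (m + 1 - pord (p 1%N)))
           - maxn 1 (m - pord (p 0%N)))%N
  /\ (Dm_zero V m -> pord (p 0%N) = 0%N /\ pord (p 1%N) = 1%N).
Proof.
move=> m_ge2 _ XmV p_basis pord_incr.
have := pord_incr 0%N; set nu1 := pord (p 0%N); set nu2 := pord (p 1%N) => lt_nu12.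
set X := maxn 1 (maxn nu1 (m + 1 - nu2)); set Y := maxn 1 (m - nu1).
have dimD : dimDm_ge V m ((m - X) + (m - Y)).
  by apply: (dimDm_ge_shifts XmV p_basis pord_incr); rewrite -/nu1 -/nu2 /X /Y; lia.
split=> [|/dimDm_ge_eq0 /(_ dimD)].
  by apply: dimDm_ge_le dimD; lia.
rewrite /X /Y; lia.
Qed.
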